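(* Suppose that the bivariate copula $A$ allows a continuous Markov kernel $K_A$. Then $$\lim_{N\to\infty}\sup_{(x,y)\in[0,1]^2}\left|K_{\mathcal{B}_N(A)}(x,[0,y])-K_A(x,[0,y])\right|=0,$$ i.e. $(\mathcal{B}_N(A))_{N\in\mathbb{N}}$ converges uniformly conditional to $A$.
   Context: A (bivariate) copula is a distribution function on $[0,1]^2$ with uniform marginals; each copula $B$ corresponds to a doubly stochastic measure $\mu_B$ with $B(x,y)=\mu_B([0,x]\times[0,y])$. A Markov kernel of $B$ is a map $K_B:[0,1]\times\mathcal{B}([0,1])\to[0,1]$, measurable in the first argument, a probability measure in the second, with $\int_{E_1}K_B(x,E_2)\,d\lambda(x)=\mu_B(E_1\times E_2)$ for all Borel $E_1,E_2$ ($\lambda$ = Lebesgue measure). $A$ allows a continuous Markov kernel if it has a version $K_A$ with $(x,y)\mapsto K_A(x,[0,y])$ continuous on $[0,1]^2$; $K_A$ denotes this version. Bernstein approximation: $p_{N,k}(u)=\binom Nk u^k(1-u)^{N-k}$ for $k\in\{0,\dots,N\}$ and $p_{N,k}\equiv0$ otherwise; $\mathcal{B}_N(A)(x,y)=\sum_{i,j=1}^N A(\tfrac iN,\tfrac jN)p_{N,i}(x)p_{N,j}(y)$, with Markov kernel version $K_{\mathcal{B}_N(A)}(x,[0,y])=N\sum_{i,j=1}^N A(\tfrac iN,\tfrac jN)\big(p_{N-1,i-1}(x)-p_{N-1,i}(x)\big)p_{N,j}(y)$. *)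

From HB Require Import structures.
From mathcomp Require Import all_boot all_order all_algebra.
From mathcomp Require Import all_classical all_reals all_analysis.
Set Implicit Arguments. Unset Strict Implicit. Unset Printing Implicit Defensive.
Import Order.TTheory GRing.Theory Num.Theory.
Import numFieldNormedType.Exports.
Local Open Scope classical_set_scope.
Local Open Scope ring_scope.

Definition I01 {R : realType} : set R := `[0, 1]%classic.
Definition square01 {R : realType} : set (R * R) := I01 `*` I01.

Definition copula_measure {R : realType} (A : R -> R -> R)
    (mu : {measure set (R * R) -> \bar R}) : Prop :=
  (forall x y : R, x \in I01 -> y \in I01 ->
     mu (`[0, x]%classic `*` `[0, y]%classic) = (A x y)%:E) /\
  mu (~` square01) = 0%E.

(* A is a (bivariate) copula: the distribution function on [0,1]^2 of a
   probability measure mu (concentrated on [0,1]^2) with uniform marginals. *)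
Definition is_copula {R : realType} (A : R -> R -> R)
    (mu : {measure set (R * R) -> \bar R}) : Prop :=
  copula_measure A mu /\
  (forall x : R, x \in I01 -> A x 1 = x /\ A 1 x = x).

Definition markov_kernel_of {R : realType}
    (mu : {measure set (R * R) -> \bar R}) (K : R.-pker R ~> R) : Prop :=
  (forall x : R, x \in I01 -> K x I01 = 1%E) /\
  (forall E1 E2 : set R, measurable E1 -> measurable E2 ->
     E1 `<=` I01 -> E2 `<=` I01 ->
     (\int[lebesgue_measure]_(x in E1) K x E2 = mu (E1 `*` E2))%E).

(* Bernstein basis polynomial p_{N,k}, extended by 0 for k > N. *)
Definition bern {R : realType} (N k : nat) (u : R) : R :=
  if (k <= N)%N then 'C(N, k)%:R * u ^+ k * (1 - u) ^+ (N - k) else 0.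

Definition KBernstein {R : realType} (A : R -> R -> R) (N : nat) (x y : R) : R :=
  N%:R * \sum_(1 <= i < N.+1) \sum_(1 <= j < N.+1)
    A (i%:R / N%:R) (j%:R / N%:R) * (bern N.-1 i.-1 x - bern N.-1 i x) * bern N j y.

Definition kernel_cdf {R : realType} (K : R.-pker R ~> R) (x y : R) : R :=
  fine (K x `[0, y]%classic).

From HB Require Import structures.
From mathcomp Require Import all_boot all_order all_algebra.
From mathcomp Require Import all_classical all_reals all_analysis.
From mathcomp Require Import measurable_realfun ring lra.
Import Order.TTheory GRing.Theory Num.Theory.
Import numFieldNormedType.Exports.
Local Open Scope classical_set_scope.
Local Open Scope ring_scope.

Set Implicit Arguments.
Unset Strict Implicit.
Unset Printing Implicit Defensive.

(* Write N = n + 1. Summation by parts in i turns K_{B_N(A)}(x,[0,y]) into the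
   average of the difference quotients N (A((k+1)/N, j/N) - A(k/N, j/N)) against
   the product weights p_{n,k}(x) p_{N,j}(y). By the disintegration property each
   quotient is the mean of t |-> K_A(t,[0,j/N]) over ]k/N,(k+1)/N], so it is
   eps-close to K_A(x,[0,y]) as soon as (k/n, j/N) is close to (x,y), by uniform
   continuity of K_A on the compact square. The weight of the remaining indices is
   controlled as in Bernstein's proof of the Weierstrass theorem, through the
   variances x(1-x)/n and y(1-y)/N of the binomial weights. *)

Lemma sum_by_parts (R : pzRingType) N (a q : nat -> R) : a 0%N = 0 -> q N = 0 ->
  \sum_(1 <= i < N.+1) a i * (q i.-1 - q i) = \sum_(0 <= k < N) (a k.+1 - a k) * q k.
Proof.
move=> a0 qN; under eq_bigr do rewrite mulrBr.
under [RHS]eq_bigr do rewrite mulrBl.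
rewrite !sumrB big_add1 /=; congr (_ - _).
have dropN : \sum_(0 <= i < N.+1) a i * q i = \sum_(0 <= i < N) a i * q i.
  by rewrite big_nat_recr //= qN mulr0 addr0.
by rewrite -dropN [RHS]big_nat_recl // a0 mul0r add0r big_add1.
Qed.

Lemma sum_prod_weights (R : comPzRingType) (I J : Type) (r : seq I) (s : seq J)
    (p : I -> R) (q : J -> R) (U : I -> R) (V : J -> R) (eps c : R) :
  \sum_(i <- r) p i = 1 -> \sum_(j <- s) q j = 1 ->
  \sum_(i <- r) \sum_(j <- s) (eps + c * (U i + V j)) * p i * q j
  = eps + c * (\sum_(i <- r) U i * p i + \sum_(j <- s) V j * q j).
Proof.
move=> p_sum1 q_sum1.
have inner i : \sum_(j <- s) (eps + c * (U i + V j)) * p i * q j =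
    eps * p i + c * (U i * p i) + (c * \sum_(j <- s) V j * q j) * p i.
  rewrite -[X in X + _]mulr1 -q_sum1 !mulr_sumr big_distrl -big_split /=.
  by apply: eq_bigr => j _; ring.
under eq_bigr do rewrite inner.
by rewrite !big_split /= -!mulr_sumr p_sum1; ring.
Qed.

Lemma le_norm_near_far (R : realFieldType) (eps d p q z : R) :
  0 < d -> 0 <= eps -> `|z| <= 1 -> (`|p| < d / 2 -> `|q| < d -> `|z| <= eps) ->
  `|z| <= eps + 4 / d ^+ 2 * (p ^+ 2 + q ^+ 2).
Proof.
move=> d0 eps0 z1 z_near.
have d2_gt0 : 0 < d ^+ 2 by rewrite exprn_gt0.
have sqr_normE (x : R) : `|x| ^+ 2 = x ^+ 2 := real_normK (num_real x).
have far_ge1 : d / 2 <= `|p| \/ d <= `|q| -> 1 <= 4 / d ^+ 2 * (p ^+ 2 + q ^+ 2).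
  rewrite mulrAC ler_pdivlMr // mul1r -(sqr_normE p) -(sqr_normE q).
  have sqr_le (a b : R) : 0 <= a -> a <= b -> a ^+ 2 <= b ^+ 2.
    by move=> a0 ab; rewrite lerXn2r // nnegrE (le_trans a0).
  case=> [p_far|q_far].
  - by have := sqr_le _ _ (ltW (divr_gt0 d0 (ltr0Sn _ 1))) p_far; nra.
  - by have := sqr_le _ _ (ltW d0) q_far; nra.
have far_ge0 : 0 <= 4 / d ^+ 2 * (p ^+ 2 + q ^+ 2).
  by rewrite mulr_ge0 ?addr_ge0 ?sqr_ge0 ?divr_ge0 // ltW.
case: (ltP `|p| (d / 2)) => [p_near|p_far]; last by have := far_ge1 (or_introl p_far); lra.
case: (ltP `|q| d) => [q_near|q_far]; last by have := far_ge1 (or_intror q_far); lra.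
by have := z_near p_near q_near; lra.
Qed.

Lemma ler_div_half (R : realFieldType) (c e n : R) :
  0 < c -> 0 < e -> 2 * c / e <= n -> c / n <= e / 2.
Proof.
move=> c_gt0 e_gt0 n_large.
have n_gt0 : 0 < n by apply: lt_le_trans n_large; rewrite !mulr_gt0 ?invr_gt0.
rewrite ler_pdivrMr // in n_large.
by rewrite ler_pdivrMr // mulrAC ler_pdivlMr // mulrC [e * n]mulrC.
Qed.

Lemma sup_norm_image_le (R : realType) (T : Type) (D : set T) (f : T -> R) (e : R) :
  D !=set0 -> (forall p, D p -> `|f p| <= e) -> `|sup [set `|f p| | p in D]| <= e.
Proof.
move=> [p0 Dp0] f_le.
have ub_e : ubound [set `|f p| | p in D] e by move=> _ [p Dp <-]; exact: f_le.
have S_p0 : [set `|f p| | p in D] `|f p0| by exists p0.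
rewrite ger0_norm; first by apply: ge_sup => //; exists `|f p0|.
by apply: le_trans (ub_le_sup _ S_p0); [exact: normr_ge0 | exists e].
Qed.

Lemma compact_unif_continuous (R : realType) (T U : pseudoMetricType R) (D : set T)
    (f : T -> U) :
  compact D -> {within D, continuous f} ->
  forall e : R, 0 < e -> exists2 d : R, 0 < d &
    forall p q, D p -> D q -> ball p d q -> ball (f p) e (f q).
Proof.
move=> /compact_near_coveringP/near_covering_withinP cptD fcont e e0.
pose P d p := forall q, D q -> ball p d q -> ball (f p) e (f q).
have near0_P : \forall d \near (0 : R)^'+, D `<=` P d.
  apply: cptD => p Dp.
  have /cvg_ball/(_ (e / 2) (divr_gt0 e0 (ltr0Sn _ 1))) := (subspace_continuousP _ _).1 fcont p Dp.
  move=> /nbhs_ballP[r /= r0 near_p].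
  have r20 : 0 < r / 2 by rewrite divr_gt0.
  exists (ball p (r / 2), [set d | 0 < d /\ d < r / 2]) => /=.
    by split; [exact: nbhsx_ballx | exact: filterI (nbhs_right_gt 0) (nbhs_right_lt r20)].
  move=> [x' d] /= [px' [d0 dr]] Dx' q Dq x'q.
  have pq : ball p r q.
    by rewrite [r]splitr; apply: ball_triangle px' (le_ball _ x'q); rewrite ltW.
  apply: (@ball_splitr _ _ (f p)); [apply: near_p Dx' | exact: near_p Dq].
  by apply: le_ball px'; rewrite ler_pdivrMr // ler_peMr //; lra.
near (0 : R)^'+ => d.
exists d; first by near: d; exact: nbhs_right_gt.
by move=> p q Dp; apply: (near near0_P d).
Unshelve. all: by end_near.
Qed.

Lemma integral_itv_bounds (R : realType) (f : R -> \bar R) (a b lo hi : R) :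
  a <= b -> 0 <= lo -> measurable_fun `]a, b]%classic f ->
  (forall t, a < t <= b -> (lo%:E <= f t <= hi%:E)%E) ->
  ((lo * (b - a))%:E <= \int[lebesgue_measure]_(t in `]a, b]%classic) f t <= (hi * (b - a))%:E)%E.
Proof.
move=> ab lo_ge0 mf f_bnd.
have f_ge : forall t, `]a, b]%classic t -> (lo%:E <= f t)%E.
  by move=> t; rewrite /= in_itv /= => /f_bnd /andP[].
have f_le : forall t, `]a, b]%classic t -> (f t <= hi%:E)%E.
  by move=> t; rewrite /= in_itv /= => /f_bnd /andP[].
have int_cst c : (\int[lebesgue_measure]_(t in `]a, b]%classic) c%:E = (c * (b - a))%:E)%E.
  rewrite integral_cst /=; last exact: measurable_itv.
  rewrite lebesgue_measure_itv /= lte_fin EFinM.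
  by case: ltgtP ab => [_ _|//|-> _]; rewrite ?subrr ?EFinN.
rewrite -!int_cst; apply/andP; split; apply: ge0_le_integral => //.
by move=> t /f_ge; apply: le_trans; rewrite lee_fin.
Qed.

Section bernstein_basis.
Variable R : realType.
Implicit Types (x : R) (f : nat -> R).

Lemma bern_ge0 n k x : 0 <= x <= 1 -> 0 <= bern n k x.
Proof.
move=> /andP[x0 x1]; rewrite /bern; case: ifP => // _.
by rewrite !mulr_ge0 ?exprn_ge0 ?subr_ge0.
Qed.

Lemma bern_small n k x : (n < k)%N -> bern n k x = 0.
Proof. by rewrite /bern ltnNge => /negbTE ->. Qed.

Lemma bernS0 n x : bern n.+1 0 x = (1 - x) * bern n 0 x.
Proof. by rewrite /bern !leq0n !bin0 !subn0 !expr0 !mul1r exprS. Qed.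

Lemma bernSS n k x : bern n.+1 k.+1 x = x * bern n k x + (1 - x) * bern n k.+1 x.
Proof.
rewrite /bern ltnS subSS; case: (ltngtP k n) => hk /=.
- by rewrite binS natrD -[(n - k)%N](subnSK hk) !exprS; ring.
- by ring.
- by rewrite hk subnn !binn exprS; ring.
Qed.

Definition bern_mean n f x := \sum_(0 <= k < n.+1) f k * bern n k x.

Lemma bern_meanS n f x :
  bern_mean n.+1 f x = x * bern_mean n (f \o succn) x + (1 - x) * bern_mean n f x.
Proof.
have shift : \sum_(0 <= k < n.+1) f k * bern n k x =
    f 0%N * bern n 0 x + \sum_(0 <= k < n.+1) f k.+1 * bern n k.+1 x.
  by rewrite big_nat_recl // [in RHS]big_nat_recr //= (@bern_small n n.+1) // mulr0 addr0.
rewrite /bern_mean big_nat_recl // bernS0 shift.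
under eq_bigr do rewrite bernSS mulrDr !(mulrCA (f _)).
by rewrite big_split /= -!mulr_sumr; ring.
Qed.

Lemma bern_mean1 n x : bern_mean n (fun=> 1) x = 1.
Proof.
elim: n => [|n IH]; first by rewrite /bern_mean big_nat1 /bern /= mul1r !mulr1.
by rewrite bern_meanS IH; ring.
Qed.

Lemma bern_sum1 n x : \sum_(0 <= k < n.+1) bern n k x = 1.
Proof. by rewrite -(bern_mean1 n x); apply: eq_bigr => k _; rewrite mul1r. Qed.

Lemma bern_meanD n f g x :
  bern_mean n (fun k => f k + g k) x = bern_mean n f x + bern_mean n g x.
Proof. by rewrite /bern_mean -big_split; apply: eq_bigr => k _; rewrite mulrDl. Qed.

Lemma bern_meanZ n c f x : bern_mean n (fun k => c * f k) x = c * bern_mean n f x.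
Proof. by rewrite /bern_mean mulr_sumr; apply: eq_bigr => k _; rewrite mulrA. Qed.

Lemma bern_mean_id n x : bern_mean n (fun k => k%:R) x = n%:R * x.
Proof.
elim: n => [|n IH]; first by rewrite /bern_mean big_nat1 !mul0r.
rewrite bern_meanS /comp.
have -> : bern_mean n (fun k => k.+1%:R) x = bern_mean n (fun k => k%:R + 1) x.
  by apply: eq_bigr => k _; rewrite -natr1.
by rewrite bern_meanD bern_mean1 IH -natr1; ring.
Qed.

Lemma bern_mean_sqr n x :
  bern_mean n (fun k => k%:R ^+ 2) x = n%:R * x * (1 - x) + (n%:R * x) ^+ 2.
Proof.
elim: n => [|n IH]; first by rewrite /bern_mean big_nat1; ring.
rewrite bern_meanS /comp.
have -> : bern_mean n (fun k => k.+1%:R ^+ 2) x =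
    bern_mean n (fun k => k%:R ^+ 2 + (2 * k%:R + 1)) x.
  by apply: eq_bigr => k _; rewrite -natr1; congr (_ * _); ring.
by rewrite !bern_meanD bern_meanZ bern_mean1 bern_mean_id IH -natr1; ring.
Qed.

Lemma bern_var n x : (0 < n)%N ->
  \sum_(0 <= k < n.+1) (k%:R / n%:R - x) ^+ 2 * bern n k x = x * (1 - x) / n%:R.
Proof.
move=> n_gt0; have n_neq0 : n%:R != 0 :> R by rewrite pnatr_eq0 -lt0n.
have -> : \sum_(0 <= k < n.+1) (k%:R / n%:R - x) ^+ 2 * bern n k x =
    n%:R^-2 * bern_mean n (fun k => k%:R ^+ 2) x
    - 2 * x / n%:R * bern_mean n (fun k => k%:R) x + x ^+ 2 * bern_mean n (fun=> 1) x.
  by rewrite /bern_mean !mulr_sumr -sumrB -big_split /=; apply: eq_bigr => k _; field.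
by rewrite bern_mean_sqr bern_mean_id bern_mean1; field.
Qed.

End bernstein_basis.

Lemma bern_var_sum_le (R : realFieldType) n (x y : R) :
  (0 < n)%N -> 0 <= x <= 1 -> 0 <= y <= 1 ->
  x * (1 - x) / n%:R + y * (1 - y) / n.+1%:R <= n%:R^-1.
Proof.
move=> n_gt0 /andP[x0 x1] /andP[y0 y1].
have w_gt0 : 0 < n%:R^-1 :> R by rewrite invr_gt0 ltr0n.
have w'_le : n.+1%:R^-1 <= n%:R^-1 :> R by rewrite lef_pV2 ?posrE ?ltr0n // ler_nat.
have w'_ge0 : 0 <= n.+1%:R^-1 :> R by rewrite invr_ge0.
set w := n%:R^-1 in w_gt0 w'_le *; set w' := n.+1%:R^-1 in w'_le w'_ge0 *; clearbody w w'.
have /(ler_wpM2r (ltW w_gt0)) : x * (1 - x) <= 1 / 4 by have := sqr_ge0 (x - 1 / 2); nra.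
have /(ler_wpM2r w'_ge0) : y * (1 - y) <= 1 / 4 by have := sqr_ge0 (y - 1 / 2); nra.
by nra.
Qed.

Section bernstein_kernel.
Variable R : realType.
Implicit Types (A : R -> R -> R) (x y : R).

Definition grid_diff_quot A n k j : R :=
  n.+1%:R * (A (k.+1%:R / n.+1%:R) (j%:R / n.+1%:R) - A (k%:R / n.+1%:R) (j%:R / n.+1%:R)).

Lemma grid_in01 n j : (j <= n.+1)%N -> 0 <= (j%:R / n.+1%:R : R) <= 1.
Proof.
by move=> jn; rewrite divr_ge0 //= ler_pdivrMr ?ltr0n // mul1r ler_nat.
Qed.

Lemma KBernsteinE A n x y :
  (forall t, 0 <= t <= 1 -> A 0 t = 0) -> (forall t, 0 <= t <= 1 -> A t 0 = 0) ->
  KBernstein A n.+1 x y = \sum_(0 <= k < n.+1) \sum_(0 <= j < n.+2)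
    grid_diff_quot A n k j * bern n k x * bern n.+1 j y.
Proof.
move=> A0t At0.
rewrite /KBernstein /= exchange_big [RHS]exchange_big /= [RHS]big_ltn //=.
have vanish : \sum_(0 <= k < n.+1) grid_diff_quot A n k 0 * bern n k x * bern n.+1 0 y = 0.
  rewrite big_nat_cond big1 // => k /andP[/andP[_ kn] _].
  by rewrite /grid_diff_quot !mul0r !At0 ?grid_in01 ?(ltnW kn) // subrr !mulr0 !mul0r.
rewrite vanish add0r.
rewrite mulr_sumr; apply: eq_big_nat => j /andP[_ jn].
rewrite -big_distrl /= (@sum_by_parts _ n.+1 (fun i => A (i%:R / n.+1%:R) (j%:R / n.+1%:R))).
- by rewrite big_distrl mulr_sumr; apply: eq_bigr => k _; rewrite /grid_diff_quot /=; ring.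
- by rewrite mulr0n mul0r A0t ?grid_in01 // ltnW.
- exact: bern_small.
Qed.

End bernstein_kernel.

Lemma mem_I01 (R : realType) (x : R) : 0 <= x <= 1 -> x \in (I01 : set R).
Proof. by move=> x01; rewrite inE /I01 /= in_itv. Qed.

Lemma square01P (R : realType) (t v : R) : 0 <= t <= 1 -> 0 <= v <= 1 -> square01 (t, v).
Proof. by move=> t01 v01; split; rewrite /I01 /= in_itv. Qed.

Lemma compact_square01 (R : realType) : compact (square01 : set (R * R)).
Proof. by apply: compact_setX; exact: segment_compact. Qed.

Section kernel_cdf.
Variables (R : realType) (K : R.-pker R ~> R).

Lemma kernel_cdfE t v : K t `[0, v]%classic = (kernel_cdf K t v)%:E.
Proof.
have K_le1 : (K t `[0%R, v]%classic <= 1)%E.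
  by rewrite -(@prob_kernel _ _ _ _ _ K t); apply: le_measure; rewrite ?inE //; exact: measurable_itv.
by rewrite /kernel_cdf fineK // ge0_fin_numE ?measure_ge0 // (le_lt_trans K_le1) ?ltey.
Qed.

Lemma kernel_cdf_in01 t v : 0 <= kernel_cdf K t v <= 1.
Proof.
rewrite -!lee_fin -kernel_cdfE measure_ge0 /= -(@prob_kernel _ _ _ _ _ K t).
by apply: le_measure; rewrite ?inE //; exact: measurable_itv.
Qed.

End kernel_cdf.

Section copula.
Variables (R : realType) (A : R -> R -> R) (mu : {measure set (R * R) -> \bar R}).
Hypothesis copA : is_copula A mu.

Lemma copula_le x x' y y' : 0 <= x <= x' -> x' <= 1 -> 0 <= y <= y' -> y' <= 1 ->
  A x y <= A x' y'.
Proof.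
move: copA => [[mu_rect _] _] /andP[x0 xx'] x'1 /andP[y0 yy'] y'1.
have [x'0 x1] := (le_trans x0 xx', le_trans xx' x'1).
have [y'0 y1] := (le_trans y0 yy', le_trans yy' y'1).
rewrite -lee_fin -!mu_rect ?mem_I01 ?x0 ?x1 ?x'0 ?x'1 ?y0 ?y1 ?y'0 ?y'1 //.
apply: le_measure; rewrite ?inE; try exact: measurableX (measurable_itv _) (measurable_itv _).
move=> [s w] /=; rewrite !in_itv /= => -[/andP[-> sx] /andP[-> wy]].
by rewrite (le_trans sx xx') (le_trans wy yy').
Qed.

Lemma copula_ge0 x y : 0 <= x <= 1 -> 0 <= y <= 1 -> 0 <= A x y.
Proof.
move: copA => [[mu_rect _] _] x01 y01.
by rewrite -lee_fin -mu_rect ?mem_I01 // measure_ge0.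
Qed.

Lemma copula_boundary0 : A 0 1 = 0 /\ A 1 0 = 0.
Proof. by apply: copA.2; rewrite mem_I01 // lexx ler01. Qed.

Lemma copula0x y : 0 <= y <= 1 -> A 0 y = 0.
Proof.
move=> /andP[y0 y1]; apply/eqP; rewrite eq_le copula_ge0 ?lexx ?ler01 ?y0 ?y1 // andbT.
by rewrite -[leRHS]copula_boundary0.1 copula_le ?lexx ?y0.
Qed.

Lemma copulax0 x : 0 <= x <= 1 -> A x 0 = 0.
Proof.
move=> /andP[x0 x1]; apply/eqP; rewrite eq_le copula_ge0 ?lexx ?ler01 ?x0 ?x1 // andbT.
by rewrite -[leRHS]copula_boundary0.2 copula_le ?lexx ?x0.
Qed.

Variable K : R.-pker R ~> R.
Hypothesis kerK : markov_kernel_of mu K.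

Lemma copula_diffE a b v : 0 <= a <= b -> b <= 1 -> 0 <= v <= 1 ->
  ((A b v - A a v)%:E = \int[lebesgue_measure]_(t in `]a, b]%classic) K t `[0%R, v]%classic)%E.
Proof.
move: copA kerK => [[mu_rect _] _] [_ disint] /andP[a0 ab] b1 /andP[v0 v1].
have split_rect : `[0, b]%classic `*` `[0, v]%classic = `[0, a]%classic `*` `[0, v]%classic `|` `]a, b]%classic `*` `[0, v]%classic.
  apply/seteqP; split => [[s w]|[s w]] /=; rewrite !in_itv /=.
    by move=> [/andP[s0 sb] wv]; case: (leP s a) => sa; [left|right]; split; rewrite ?s0 ?sb.
  move=> [] [/andP[s1 s2] wv]; split=> //.
    by rewrite s1 (le_trans s2 ab).
  by rewrite (le_trans a0 (ltW s1)) s2.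
have disj : `[0, a]%classic `*` `[0, v]%classic `&` `]a, b]%classic `*` `[0, v]%classic = set0 :> set (R * R).
  apply/seteqP; split => [[s w]|//] /=; rewrite !in_itv /= => -[[/andP[_ sa] _] [/andP[a_s _] _]].
  by move: (lt_le_trans a_s sa); rewrite ltxx.
have J01 : `]a, b]%classic `<=` I01.
  move=> t; rewrite /I01 /= !in_itv /= => /andP[/ltW a_t tb].
  by rewrite (le_trans a0 a_t) (le_trans tb b1).
have V01 : `[0, v]%classic `<=` I01.
  by move=> w; rewrite /I01 /= !in_itv /= => /andP[-> /le_trans->].
rewrite disint //; try exact: measurable_itv.
have additive : (A b v)%:E = ((A a v)%:E + mu (`]a, b]%classic `*` `[0%R, v]%classic))%E.
  rewrite -!mu_rect ?mem_I01 ?a0 ?v0 ?v1 ?(le_trans a0 ab) ?(le_trans ab) // split_rect.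
  by rewrite measureU ?disj //; exact: measurableX (measurable_itv _) (measurable_itv _).
by rewrite EFinB additive [(_ + mu _)%E]addeC addeK.
Qed.

Lemma copula_diff_bounds a b v lo hi : 0 <= a <= b -> b <= 1 -> 0 <= v <= 1 -> 0 <= lo ->
  (forall t, a < t <= b -> lo <= kernel_cdf K t v <= hi) ->
  lo * (b - a) <= A b v - A a v <= hi * (b - a).
Proof.
move=> /andP[a0 ab] b1 v01 lo_ge0 cdf_bnd.
rewrite -!lee_fin copula_diffE ?a0 //; apply: integral_itv_bounds => //.
  apply: measurable_funS (measurable_kernel K _ _) => //; exact: measurable_itv.
by move=> t /cdf_bnd; rewrite kernel_cdfE !lee_fin.
Qed.

Lemma grid_diff_quot_bounds n k j lo hi : (k <= n)%N -> (j <= n.+1)%N -> 0 <= lo ->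
  (forall t, k%:R / n.+1%:R < t <= k.+1%:R / n.+1%:R ->
     lo <= kernel_cdf K t (j%:R / n.+1%:R) <= hi) ->
  lo <= grid_diff_quot A n k j <= hi.
Proof.
move=> kn jn lo_ge0 cdf_bnd.
have N_gt0 : 0 < n.+1%:R :> R by rewrite ltr0n.
have ab : 0 <= (k%:R / n.+1%:R : R) <= k.+1%:R / n.+1%:R.
  by rewrite divr_ge0 //= ler_pM2r ?invr_gt0 // ler_nat.
have /andP[_ b1] := grid_in01 R (kn : k.+1 <= n.+1)%N.
have /andP[lo_le le_hi] := copula_diff_bounds ab b1 (grid_in01 R jn) lo_ge0 cdf_bnd.
have ba : k.+1%:R / n.+1%:R - k%:R / n.+1%:R = n.+1%:R^-1 :> R.
  by rewrite -mulrBl -natr1 addrC addKr mul1r.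
rewrite ba in lo_le le_hi.
by rewrite -(ler_pdivrMl _ _ N_gt0) -(ler_pdivlMl _ _ N_gt0) ![_^-1 * _]mulrC lo_le le_hi.
Qed.

End copula.

Section bernstein_kernel_estimate.
Variables (R : realType) (A : R -> R -> R) (mu : {measure set (R * R) -> \bar R}).
Variable K : R.-pker R ~> R.
Hypotheses (copA : is_copula A mu) (kerK : markov_kernel_of mu K).
Variables (eps d : R).
Hypotheses (eps_ge0 : 0 <= eps) (d_gt0 : 0 < d).
Hypothesis cdf_close : forall t x v y : R,
  0 <= t <= 1 -> 0 <= x <= 1 -> 0 <= v <= 1 -> 0 <= y <= 1 ->
  `|t - x| < d -> `|v - y| < d -> `|kernel_cdf K t v - kernel_cdf K x y| <= eps.

Lemma grid_diff_quot_close n k j x y :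
  (0 < n)%N -> (k <= n)%N -> (j <= n.+1)%N -> n.+1%:R^-1 <= d / 2 ->
  0 <= x <= 1 -> 0 <= y <= 1 ->
  `|grid_diff_quot A n k j - kernel_cdf K x y|
    <= eps + 4 / d ^+ 2 * ((k%:R / n%:R - x) ^+ 2 + (j%:R / n.+1%:R - y) ^+ 2).
Proof.
move=> n_gt0 kn jn N_small x01 y01.
have dq_bounds := grid_diff_quot_bounds copA kerK kn jn.
have n_gt0' : 0 < n%:R :> R by rewrite ltr0n.
have NE : n.+1%:R = n%:R + 1 :> R by rewrite -natr1.
have kn' : k%:R <= n%:R :> R by rewrite ler_nat.
have k_ge0 : 0 <= k%:R :> R by [].
have [/andP[a0 _] /andP[_ b1]] := (grid_in01 R (leqW kn), grid_in01 R (kn : k.+1 <= n.+1)%N).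
have /andP[v0 v1] := grid_in01 R jn.
set a := k%:R / n.+1%:R in a0 dq_bounds *; set b := k.+1%:R / n.+1%:R in b1 dq_bounds *.
set v := j%:R / n.+1%:R in v0 v1 dq_bounds *; set u := k%:R / n%:R.
set G := kernel_cdf K x y.
have ba_small : b - a <= d / 2.
  by rewrite /b /a -mulrBl -natr1 addrC addKr mul1r.
have au : a <= u by rewrite ler_pdivrMr ?ltr0n // mulrAC ler_pdivlMr // NE; nra.
have ub : u <= b by rewrite ler_pdivrMr ?ltr0n // mulrAC ler_pdivlMr // NE -natr1; nra.
have /andP[G0 G1] : 0 <= G <= 1 := kernel_cdf_in01 K x y.
clearbody a b u v.
apply: le_norm_near_far => //.
  have /andP[D0 D1] := dq_bounds 0 1 (lexx 0) (fun t _ => kernel_cdf_in01 K t v).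
  by rewrite ler_norml; apply/andP; split; lra.
rewrite ltr_norml => /andP[u_x1 u_x2] v_near.
have t_close (t : R) : a < t <= b -> `|kernel_cdf K t v - G| <= eps.
  move=> /andP[a_t t_b]; apply: cdf_close => //; rewrite ?v0 ?v1 //.
    by apply/andP; split; lra.
  by rewrite ltr_norml; apply/andP; split; lra.
have lo_ge0 : 0 <= Num.max 0 (G - eps) by rewrite le_max lexx.
have cdf_bnd t : a < t <= b -> Num.max 0 (G - eps) <= kernel_cdf K t v <= G + eps.
  move=> /t_close; rewrite ler_norml => /andP[lo_t t_hi].
  have /andP[F0 _] := kernel_cdf_in01 K t v.
  by rewrite ge_max F0 /=; apply/andP; split; lra.
have /andP[D_lo D_hi] := dq_bounds _ _ lo_ge0 cdf_bnd.
have lo_ge : G - eps <= Num.max 0 (G - eps) by rewrite le_max lexx orbT.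
by rewrite ler_norml; apply/andP; split; lra.
Qed.

Lemma KBernstein_close n x y :
  (0 < n)%N -> n.+1%:R^-1 <= d / 2 -> 0 <= x <= 1 -> 0 <= y <= 1 ->
  `|KBernstein A n.+1 x y - kernel_cdf K x y|
    <= eps + 4 / d ^+ 2 * (x * (1 - x) / n%:R + y * (1 - y) / n.+1%:R).
Proof.
move=> n_gt0 N_small x01 y01.
rewrite KBernsteinE; [|exact: copula0x copA|exact: copulax0 copA].
set G := kernel_cdf K x y.
have mean_G : \sum_(0 <= k < n.+1) \sum_(0 <= j < n.+2) G * bern n k x * bern n.+1 j y = G.
  under eq_bigr do rewrite -mulr_sumr bern_sum1 mulr1.
  by rewrite -mulr_sumr bern_sum1 mulr1.
rewrite -[X in `|_ - X|]mean_G -sumrB; under eq_bigr do rewrite -sumrB.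
apply: le_trans (ler_norm_sum _ _ _) _.
apply: le_trans (_ : \sum_(0 <= k < n.+1) \sum_(0 <= j < n.+2)
    (eps + 4 / d ^+ 2 * ((k%:R / n%:R - x) ^+ 2 + (j%:R / n.+1%:R - y) ^+ 2))
      * bern n k x * bern n.+1 j y <= _).
  apply: ler_sum_nat => k /andP[_ kn]; apply: le_trans (ler_norm_sum _ _ _) _.
  apply: ler_sum_nat => j /andP[_ jn].
  rewrite -!mulrBl !normrM [`|bern _ _ x|]ger0_norm ?bern_ge0 //.
  rewrite [`|bern _ _ y|]ger0_norm ?bern_ge0 //.
  by rewrite !ler_wpM2r ?bern_ge0 // grid_diff_quot_close.
by rewrite sum_prod_weights ?bern_sum1 // !bern_var.
Qed.

End bernstein_kernel_estimate.

Theorem lemma4p1 (R : realType) (A : R -> R -> R)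
    (mu : {measure set (R * R) -> \bar R}) (K : R.-pker R ~> R) :
  is_copula A mu ->
  markov_kernel_of mu K ->
  {within square01, continuous (fun p : R * R => kernel_cdf K p.1 p.2)} ->
  (fun N : nat => sup [set `|KBernstein A N p.1 p.2 - kernel_cdf K p.1 p.2|
                       | p in square01]) @ \oo --> 0.
Proof.
move=> copA kerK cdf_cont; apply/cvgrPdist_le => e e_gt0.
have e2_gt0 : 0 < e / 2 by rewrite divr_gt0.
have [d d_gt0 cdf_unif] := compact_unif_continuous (@compact_square01 R) cdf_cont e2_gt0.
have cdf_close (t x v y : R) : 0 <= t <= 1 -> 0 <= x <= 1 -> 0 <= v <= 1 -> 0 <= y <= 1 ->
    `|t - x| < d -> `|v - y| < d -> `|kernel_cdf K t v - kernel_cdf K x y| <= e / 2.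
  move=> t01 x01 v01 y01 tx vy; apply/ltW.
  by apply: (cdf_unif (t, v) (x, y)); rewrite ?square01P //; split.
apply: near_inftyS; near=> n.
have n_gt0 : (0 < n)%N by near: n; exact: nbhs_infty_gt.
have N_small : n.+1%:R^-1 <= d / 2.
  rewrite -div1r ler_div_half //; apply: le_trans (_ : n%:R <= _); last by rewrite ler_nat.
  by near: n; exact: nbhs_infty_ger.
have var_small : 4 / d ^+ 2 / n%:R <= e / 2.
  by apply: ler_div_half; rewrite ?divr_gt0 ?exprn_gt0 //; near: n; exact: nbhs_infty_ger.
rewrite sub0r normrN; apply: sup_norm_image_le; first by exists (0, 0); apply: square01P; rewrite lexx ler01.
move=> [x y] [/= x01 y01]; rewrite /I01 /= !in_itv /= in x01 y01.
apply: le_trans (KBernstein_close copA kerK (ltW e2_gt0) d_gt0 cdf_close n_gt0 N_small x01 y01) _.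
rewrite [leRHS]splitr lerD2l (le_trans _ var_small) // ler_wpM2l ?bern_var_sum_le //.
by rewrite divr_ge0 ?exprn_ge0 // ltW.
Unshelve. all: by end_near.
Qed.
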